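(* Let $\Omega=\{z\in\mathbb C^{r\times(r+b)}: I_r-zz^*>0\}$ be the type-I domain of rank $r$ and fix $1\le q<r$. Let $\Omega'=\{z'\in\mathbb C^{(r-q)\times(r-q+b)}: I_{r-q}-z'z'^*>0\}$ (type-I of rank $r-q$). For $z\in\mathbb C^{r\times(r+b)}$ with singular values $t_1\ge\dots\ge t_r\ge0$, let $\Psi(z)\in\mathbb C^{(r-q)\times(r-q+b)}$ be the matrix whose $(j,j)$ entry is $t_{q+j}$ for $1\le j\le r-q$ and all other entries $0$. Let $\overline{\partial\Omega_q}=\{z\in\mathbb C^{r\times(r+b)}: t_1=\dots=t_q=1\ge t_{q+1}\}$, the closure of the $q$-th boundary component $\partial\Omega_q=\{z: t_1=\dots=t_q=1>t_{q+1}\}$. Then \[\overline{\partial\Omega_q}=\Big\{z\in\mathbb C^{r\times(r+b)}:\ \Delta^{(\ell)}_\Omega(z,z)=\sum_{i=\max(\ell-(r-q),0)}^{\min(q,\ell)}\binom{q}{i}\Delta^{(\ell-i)}_{\Omega'}\big(\Psi(z),\Psi(z)\big)\ \text{ for all }1\le\ell\le r\Big\}.\]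
   Context: For a type-I domain $\Omega_n=\{z\in\mathbb C^{n\times m}: I_n-zz^*>0\}$ of rank $n$, the Jordan triple determinant is $\Delta(z,w)=\det(I_n-zw^* )$; it satisfies $\Delta(z,z)=\prod_{j=1}^n(1-t_j^2)$ where $t_j$ are the singular values of $z$. Write $\Delta(z,w)=\sum_{\ell=0}^n(-1)^\ell\Delta^{(\ell)}(z,w)$ with $\Delta^{(\ell)}$ sesqui-analytic and homogeneous of bidegree $(\ell,\ell)$; $\Delta^{(0)}=1$. The subscripts $\Omega$, $\Omega'$ indicate which domain's $\Delta^{(\ell)}$ is meant ($\Delta^{(\ell-i)}_{\Omega'}$ with $0\le\ell-i\le r-q$). The boundary $\partial\Omega_q$ equals the orbit description $\{k(e_1+\dots+e_q+\sum_{i>q}t_ie_i)\}$ with $e_i$ the matrix units $E_{ii}$ and $k$ in the stabilizer of $0$ in the identity component of $\mathrm{Aut}(\Omega)$, $1>t_{q+1}\ge\dots\ge t_r\ge0$. *)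

From HB Require Import structures.
From mathcomp Require Import all_boot all_order all_algebra.
From mathcomp Require Import reals.
From mathcomp Require Import complex.
Set Implicit Arguments. Unset Strict Implicit. Unset Printing Implicit Defensive.
Import Order.TTheory GRing.Theory Num.Theory.
Local Open Scope ring_scope.
Local Open Scope complex_scope.

Definition adjmx (R : realType) (m n : nat) (w : 'M[R[i]]_(m, n)) : 'M[R[i]]_(n, m) :=
  (map_mx (@Num.conj _) w)^T.

(* Jordan triple determinant Delta(z,w) = det(I_m - z w^* ) and its homogeneous
   components: Delta(z,w) = \sum_l (-1)^l Delta^(l)(z,w), where Delta^(l) is
   homogeneous of bidegree (l,l).  Equivalently det(I - s z w^* ) =
   \sum_l (-1)^l s^l Delta^(l)(z,w), so Delta^(l) is (-1)^l times the
   coefficient of s^l in the polynomial s |-> det(I - s z w^* ). *)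
Definition Delta_l (R : realType) (m n : nat) (l : nat) (z w : 'M[R[i]]_(m, n)) : R[i] :=
  (-1) ^+ l *
  (\det (1%:M - 'X *: map_mx (@polyC _) (z *m adjmx w)) : {poly R[i]})`_l.

(* t (0-indexed: t 0 >= t 1 >= ... >= t (m-1) >= 0) is the list of singular
   values of z : the t j^2 are the eigenvalues of z z^*, with multiplicity. *)
Definition singular_values (R : realType) (m n : nat) (z : 'M[R[i]]_(m, n))
    (t : nat -> R) : Prop :=
  [/\ forall j, (j < m)%N -> 0 <= t j,
      forall j, (j.+1 < m)%N -> t j.+1 <= t j &
      char_poly (z *m adjmx z) = \prod_(j < m) ('X - ((t j ^+ 2)%:C)%:P)].

(* Psi(z) : the (r-q) x (r-q+b) matrix with (j,j) entry t_{q+j} (1-indexed),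
   i.e. t (q + j) 0-indexed, and zeros elsewhere. *)
Definition Psi (R : realType) (r q b : nat) (t : nat -> R) : 'M[R[i]]_(r - q, r - q + b) :=
  \matrix_(i < r - q, j < r - q + b)
     (if nat_of_ord i == nat_of_ord j then (t (q + i)%N)%:C else 0).

Definition in_closure_bdry_q (R : realType) (q : nat) (t : nat -> R) : Prop :=
  (forall j, (j < q)%N -> t j = 1) /\ t q <= 1.

From HB Require Import structures.
From mathcomp Require Import all_boot all_order all_algebra.
From mathcomp Require Import reals.
From mathcomp Require Import complex.
From mathcomp Require Import zify.
Set Implicit Arguments. Unset Strict Implicit. Unset Printing Implicit Defensive.
Import Order.TTheory GRing.Theory Num.Theory.
Local Open Scope ring_scope.

(* Since the t_j^2 are the eigenvalues of z z^*, det(I - s z z^* ) is the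
   polynomial P_t(s) = prod_j (1 - t_j^2 s), and Delta^(l)(z,z) is (-1)^l times
   its l-th coefficient.  Since Psi(z) is diagonal with entries t_(q+1),...,t_r,
   the same holds for Delta_Omega' with Q(s) = prod_(j >= q) (1 - t_j^2 s), and
   P_t = P_(t_1..t_q) * Q.  The binomial sum on the right-hand side is
   (-1)^l times the l-th coefficient of (1 - s)^q Q(s), so the identities for
   1 <= l <= r say exactly P_t = (1 - s)^q Q, i.e. prod_(j < q) (1 - t_j^2 s) =
   (1 - s)^q.  Comparing top coefficients shows that no t_j (j < q) vanishes,
   and evaluating at s = t_j^-2 then forces t_j = 1. *)

Section RecipPoly.
Variable R : comNzRingType.

Definition recip_poly n (a : nat -> R) : {poly R} := \prod_(j < n) (1 - (a j)%:P * 'X).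

Lemma coefM_1subCX (p : {poly R}) c k :
  (p * (1 - c%:P * 'X))`_k = p`_k - c * (if k == 0%N then 0 else p`_k.-1).
Proof. by rewrite mulrBr mulr1 coefB mulrCA coefCM coefMX. Qed.

Lemma recip_polyS n a : recip_poly n.+1 a = recip_poly n a * (1 - (a n)%:P * 'X).
Proof. by rewrite /recip_poly big_ord_recr. Qed.

Lemma recip_polyD n m a :
  recip_poly (n + m) a = recip_poly n a * recip_poly m (fun j => a (n + j)%N).
Proof. by rewrite /recip_poly big_split_ord. Qed.

Lemma coef0_recip_poly n a : (recip_poly n a)`_0 = 1.
Proof.
elim: n => [|n IHn]; first by rewrite /recip_poly big_ord0 coef1.
by rewrite recip_polyS coefM_1subCX IHn /= mulr0 subr0.
Qed.

Lemma recip_poly_neq0 n a : recip_poly n a != 0.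
Proof.
by apply/eqP => /(congr1 (coefp 0)); rewrite /= coef0_recip_poly coef0 => /eqP; rewrite oner_eq0.
Qed.

Lemma size_recip_poly n a : (size (recip_poly n a) <= n.+1)%N.
Proof.
elim: n => [|n IHn]; first by rewrite /recip_poly big_ord0 size_poly1.
rewrite recip_polyS; apply: (leq_trans (size_polyMleq _ _)).
have size_lin : (size (1 - (a n)%:P * 'X)%R <= 2)%N.
  apply: (leq_trans (size_polyD _ _)); rewrite size_poly1 size_polyN geq_max /=.
  apply: (leq_trans (size_polyMleq _ _)); rewrite size_polyX.
  by case: (size _) (size_polyC_leq1 (a n)) => [|[|]].
by move: IHn size_lin; set x := size _; set y := size _; lia.
Qed.

Lemma size_recip_polyM n m a b :
  (size (recip_poly n a * recip_poly m b)%R <= (n + m).+1)%N.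
Proof.
apply: leq_trans (size_polyMleq _ _) _.
by move: (size_recip_poly n a) (size_recip_poly m b); set x := size _; set y := size _; lia.
Qed.

Lemma coef_recip_poly_gt n a k : (n < k)%N -> (recip_poly n a)`_k = 0.
Proof. by move=> ltnk; apply: nth_default; exact: leq_trans (size_recip_poly n a) ltnk. Qed.

Lemma coef_recip_poly_top n a : (recip_poly n a)`_n = (-1) ^+ n * \prod_(j < n) a j.
Proof.
elim: n => [|n IHn]; first by rewrite /recip_poly !big_ord0 coef1 mulr1.
rewrite recip_polyS coefM_1subCX coef_recip_poly_gt //= IHn big_ord_recr /=.
by rewrite sub0r exprS mulN1r mulNr mulrCA [a n * _]mulrC.
Qed.

Lemma coef_recip_poly1 n k : (recip_poly n (fun=> 1))`_k = (-1) ^+ k * 'C(n, k)%:R.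
Proof.
elim: n k => [|n IHn] k.
  rewrite /recip_poly big_ord0 coef1; case: k => [|k]; first by rewrite expr0 mulr1.
  by rewrite bin0n mulr0.
rewrite recip_polyS coefM_1subCX mul1r IHn; case: k => [|k] /=; first by rewrite !bin0 subr0.
by rewrite IHn binS natrD mulrDr exprS mulN1r !mulNr.
Qed.

(* Only the coefficients of index l - i <= n of Q can be nonzero, and 'C(q, i)
   vanishes for i > q, which is where the bounds of the sum come from. *)
Lemma sum_binom_coef_recip_poly1 n q l (Q : {poly R}) :
  (forall k, (n < k)%N -> Q`_k = 0) -> (l <= n + q)%N ->
  \sum_(maxn (l - n) 0 <= i < (minn q l).+1) 'C(q, i)%:R * ((-1) ^+ (l - i) * Q`_(l - i))
  = (-1) ^+ l * (recip_poly q (fun=> 1) * Q)`_l.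
Proof.
move=> Q_gt hl; rewrite coefM mulr_sumr maxn0.
rewrite -(big_mkord xpredT (fun i => (-1) ^+ l * ((recip_poly q (fun=> 1))`_i * Q`_(l - i)))).
have lo_mid : (l - n <= (minn q l).+1)%N by lia.
have mid_hi : ((minn q l).+1 <= l.+1)%N by lia.
rewrite [X in _ = X](big_cat_nat (n := l - n)) //; last exact: leq_trans lo_mid mid_hi.
rewrite [X in _ = _ + X](big_cat_nat (n := (minn q l).+1) lo_mid mid_hi) /=.
rewrite [X in _ = X + _]big1_seq ?add0r; last first.
  move=> i /andP[_]; rewrite mem_index_iota => /andP[_ hi].
  by rewrite Q_gt ?mulr0 //; lia.
rewrite [X in _ = _ + X]big1_seq ?addr0; last first.
  move=> i /andP[_]; rewrite mem_index_iota => /andP[hi1 hi2].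
  by rewrite coef_recip_poly1 bin_small ?(mulr0, mul0r) //; lia.
apply: eq_big_seq => i; rewrite mem_index_iota => /andP[_ hi].
have -> : (-1) ^+ l = (-1) ^+ (l - i) * (-1) ^+ i :> R by rewrite -exprD subnK //; lia.
rewrite coef_recip_poly1 !mulrA -[_ * (-1) ^+ i * (-1) ^+ i]mulrA -expr2 sqrr_sign mulr1.
by congr (_ * _); rewrite mulrC.
Qed.

End RecipPoly.

Lemma eq_poly_upto (R : nzRingType) (p q : {poly R}) n :
  (size p <= n.+1)%N -> (size q <= n.+1)%N -> p`_0 = q`_0 ->
  (forall l, (1 <= l <= n)%N -> p`_l = q`_l) -> p = q.
Proof.
move=> sp sq eq0 eq_mid; apply/polyP => l.
have [->|l0] := eqVneq l 0%N; first exact: eq0.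
have [ln|nl] := leqP l n; first by apply: eq_mid; rewrite ln lt0n l0.
by rewrite !nth_default //; apply: leq_trans nl.
Qed.

Lemma recip_poly_eq1 (F : fieldType) n (a : nat -> F) :
  recip_poly n a = recip_poly n (fun=> 1) -> forall j, (j < n)%N -> a j = 1.
Proof.
move=> eq_rp j ltjn.
have prod_a1 : \prod_(k < n) a k = 1.
  have := congr1 (fun p : {poly F} => p`_n) eq_rp.
  by rewrite /= !coef_recip_poly_top prodr_const expr1n => /(can_inj (signrMK n)).
have aj0 : a j != 0.
  apply/eqP => aj0; move: prod_a1.
  by rewrite (bigD1 (Ordinal ltjn)) //= aj0 mul0r => /eqP; rewrite eq_sym oner_eq0.
(* a_j^-1 is a root of the left-hand side, hence of (1 - s)^n. *)
have := congr1 (fun p : {poly F} => p.[(a j)^-1]) eq_rp.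
rewrite /= /recip_poly !horner_prod (bigD1 (Ordinal ltjn)) //= !hornerE mulfV //.
rewrite subrr mul0r prodr_const card_ord => /esym/eqP.
by rewrite expf_eq0 subr_eq0 eq_sym invr_eq1 => /andP[_ /eqP].
Qed.

Lemma poly_eq0_on_nonzero (C : numFieldType) (p : {poly C}) :
  (forall s, s != 0 -> p.[s] = 0) -> p = 0.
Proof.
move=> p_root; apply/eqP; apply/negPn/negP => pn0.
have : (size [seq (i.+1)%:R : C | i <- iota 0 (size p)] < size p)%N.
  apply: (max_poly_roots pn0).
    by apply/allP => x /mapP[i _ ->]; apply/eqP; apply: p_root; rewrite pnatr_eq0.
  by rewrite map_inj_uniq ?iota_uniq // => i j /eqP; rewrite eqr_nat => /eqP[].
by rewrite size_map size_iota ltnn.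
Qed.

(* det(I - s A) = s^n char_poly A (1/s) for s != 0. *)
Lemma det_1_subX_mx (C : numFieldType) n (A : 'M[C]_n) (lam : nat -> C) :
  char_poly A = \prod_(j < n) ('X - (lam j)%:P) ->
  \det (1%:M - 'X *: map_mx polyC A) = recip_poly n lam.
Proof.
move=> charA; apply/eqP; rewrite -subr_eq0; apply/eqP; apply: poly_eq0_on_nonzero => s s0.
rewrite hornerD hornerN; apply/eqP; rewrite subr_eq0; apply/eqP.
have -> : (\det (1%:M - 'X *: map_mx polyC A)).[s] = \det (1%:M - s *: A).
  rewrite -[LHS]/(horner_eval s _) -det_map_mx; congr (\det _).
  apply/matrixP => i j.
  by rewrite !mxE rmorphB rmorphM rmorph_nat /= /horner_eval hornerX hornerC.
have -> : 1%:M - s *: A = s *: (s^-1%:M - A) by rewrite scalerBr scale_scalar_mx mulfV.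
rewrite detZ.
have -> : \det (s^-1%:M - A) = (char_poly A).[s^-1].
  rewrite /char_poly -[RHS]/(horner_eval s^-1 _) -det_map_mx; congr (\det _).
  by apply/matrixP => i j; rewrite !mxE rmorphB rmorphMn /= /horner_eval hornerX hornerC.
have -> : s ^+ n = \prod_(j < n) s by rewrite prodr_const card_ord.
rewrite charA /recip_poly !horner_prod -big_split /=.
by apply: eq_bigr => j _; rewrite !hornerE mulrBr mulfV // mulrC.
Qed.

Local Open Scope complex_scope.

Lemma Delta_l_recip_poly (R : realType) m n (z : 'M[R[i]]_(m, n)) (t : nat -> R) :
  char_poly (z *m adjmx z) = \prod_(j < m) ('X - ((t j ^+ 2)%:C)%:P) ->
  forall l, Delta_l l z z = (-1) ^+ l * (recip_poly m (fun j => (t j ^+ 2)%:C))`_l.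
Proof.
move=> charz l; rewrite /Delta_l; congr (_ * _).
exact: (congr1 (fun p : {poly R[i]} => p`_l) (det_1_subX_mx charz)).
Qed.

Lemma conj_real_complex (R : realType) (x : R) : Num.conj x%:C = x%:C.
Proof. by apply/eqP; rewrite eq_complex /= oppr0 !eqxx. Qed.

Lemma Psi_mul_adj (R : realType) r q b (t : nat -> R) :
  Psi r q b t *m adjmx (Psi r q b t) = diag_mx (\row_(i < r - q) ((t (q + i)%N ^+ 2)%:C)).
Proof.
apply/matrixP => i k; rewrite !mxE (bigD1 (lshift b i)) //= big1 ?addr0.
  rewrite !mxE /= eqxx; have [->|neki] := eqVneq k i.
    by rewrite eqxx mulr1n conj_real_complex rmorphXn expr2.
  by rewrite (inj_eq val_inj) (negbTE neki) mulr0n conjC0 mulr0.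
move=> j /negbTE nej; rewrite !mxE; case: eqVneq => [eij|_]; last by rewrite mul0r.
by move: nej; rewrite -(inj_eq val_inj) /= eij eqxx.
Qed.

Lemma Delta_l_Psi (R : realType) r q b (t : nat -> R) l :
  Delta_l l (Psi r q b t) (Psi r q b t) =
  (-1) ^+ l * (recip_poly (r - q) (fun j => (t (q + j)%N ^+ 2)%:C))`_l.
Proof.
apply: Delta_l_recip_poly; rewrite Psi_mul_adj char_poly_trig ?diag_mx_is_trig //.
by apply: eq_bigr => j _; rewrite !mxE eqxx mulr1n.
Qed.

Lemma sum_binom_Delta_l_Psi (R : realType) r q b (t : nat -> R) l :
  (q <= r)%N -> (l <= r)%N ->
  \sum_(maxn (l - (r - q)) 0 <= i < (minn q l).+1)
     'C(q, i)%:R * Delta_l (l - i) (Psi r q b t) (Psi r q b t) =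
  (-1) ^+ l * (recip_poly q (fun=> 1) *
               recip_poly (r - q) (fun j => (t (q + j)%N ^+ 2)%:C))`_l.
Proof.
move=> qr lr; under eq_bigr => i _ do rewrite Delta_l_Psi.
by rewrite sum_binom_coef_recip_poly1 ?subnK // => k; exact: coef_recip_poly_gt.
Qed.

Lemma in_closure_bdry_qE (R : realType) r q (t : nat -> R) :
  (0 < q < r)%N -> (forall j, (j.+1 < r)%N -> t j.+1 <= t j) ->
  in_closure_bdry_q q t <-> (forall j, (j < q)%N -> t j = 1).
Proof.
move=> /andP[q0 qr] t_decr; split=> [[] //|t1]; split=> //.
by have := t_decr q.-1; rewrite prednK // (t1 q.-1) ?ltn_predL //; apply.
Qed.

Theorem theoremA2 (R : realType) (r b q : nat) (hq1 : (1 <= q)%N) (hqr : (q < r)%N)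
    (z : 'M[R[i]]_(r, r + b)) (t : nat -> R) (ht : singular_values z t) :
  in_closure_bdry_q q t <->
  (forall l : nat, (1 <= l <= r)%N ->
     Delta_l l z z =
     \sum_(maxn (l - (r - q)) 0 <= i < (minn q l).+1)
        'C(q, i)%:R * Delta_l (l - i) (Psi r q b t) (Psi r q b t)).
Proof.
case: ht => t_ge0 t_decr charz.
set a : nat -> R[i] := fun j => (t j ^+ 2)%:C.
set Q := recip_poly (r - q) (fun j => a (q + j)%N).
have Delta_coefsE : (forall l, (1 <= l <= r)%N -> Delta_l l z z =
    \sum_(maxn (l - (r - q)) 0 <= i < (minn q l).+1)
       'C(q, i)%:R * Delta_l (l - i) (Psi r q b t) (Psi r q b t))
    <-> recip_poly r a = recip_poly q (fun=> 1) * Q.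
  split=> [coefs | PEQ l /andP[_ lr]]; last first.
    by rewrite (Delta_l_recip_poly charz) sum_binom_Delta_l_Psi ?(ltnW hqr) // PEQ.
  apply: eq_poly_upto (size_recip_poly r a) _ _ _.
  - by rewrite -[X in (_ <= X.+1)%N](subnKC (ltnW hqr)) size_recip_polyM.
  - by rewrite coef0M !coef0_recip_poly mulr1.
  - move=> l l_range; apply: (can_inj (signrMK l)); move: (coefs l l_range).
    by rewrite (Delta_l_recip_poly charz) sum_binom_Delta_l_Psi ?(ltnW hqr) //; case/andP: l_range.
have splitQ : recip_poly r a = recip_poly q a * Q by rewrite -recip_polyD subnKC // ltnW.
rewrite Delta_coefsE splitQ (in_closure_bdry_qE _ t_decr) ?hq1 //.
split=> [t1 | /(mulIf (recip_poly_neq0 _ _)) /recip_poly_eq1 a1 j ltjq].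
  by congr (_ * _); apply: eq_bigr => j _; rewrite /a t1 ?expr1n.
have /complexI tj2 : (t j ^+ 2)%:C = 1%:C by exact: a1.
by apply/eqP; rewrite -(pexpr_eq1 (n := 2)) ?t_ge0 ?tj2 //; apply: ltn_trans hqr.
Qed.
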